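(* Let $m\le p<n$. Let $Q$ be an $n\times p$ matrix with $Q^*BQ=I_p$ of the form $$Q=[\,(X_m+X_m'G)L^{-1}\;\;V\,]\,U,$$ where: - $G$ is $(n-m)\times m$ with $\|G\|=\epsilon\le1/2$; - $V$ is $n\times(p-m)$; - $U$ is $p\times p$ unitary; - $L^{-1}=[(X_m+X_m'G)^*B(X_m+X_m'G)]^{-1/2}$. Then: (1) $\|L^{-1}-I_m\|\le\epsilon^2$, and $V=X_mS+X_m'HR$ for some $m\times(p-m)$ matrix $S$ with $\|S\|\le\epsilon$, some $(n-m)\times(p-m)$ matrix $H$ with $H^*H=I_{p-m}$, and some $(p-m)\times(p-m)$ matrix $R$ with $\|R-I_{p-m}\|\le\epsilon^2$. (2) $X^*BQ=\left(\begin{bmatrix}I_m&0\\0&H\end{bmatrix}+\Theta\right)U$, where $\Theta=\begin{bmatrix}\Theta_{11}&\Theta_{12}\\ \Theta_{21}&\Theta_{22}\end{bmatrix}$ with $\Theta_{11}$ of size $m\times m$ satisfies $\|\Theta_{11}\|,\|\Theta_{22}\|\le\epsilon^2$ and $\|\Theta_{12}\|,\|\Theta_{21}\|\le(1+\epsilon^2)\epsilon$. (3) For every real diagonal $n\times n$ matrix $D=\mathrm{diag}(D_m,D_m')$, with $D_m$ of size $m\times m$, $$(Q^*BX)D(X^*BQ)=U^*\left(\begin{bmatrix}D_m&0\\0&H^*D_m'H\end{bmatrix}+\Delta\right)U,\qquad \Delta=\begin{bmatrix}\Delta_{11}&\Delta_{12}\\ \Delta_{12}^*&\Delta_{22}\end{bmatrix},$$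 where $\Delta_{11}$ is $m\times m$, $\|\Delta_{11}\|,\|\Delta_{22}\|\le4\|D\|\epsilon^2$ and $\|\Delta_{12}\|\le4\|D\|\epsilon$.
   Context: Setup: - $A,B$ are Hermitian $n\times n$ matrices, $B$ positive definite, $B=C^*C$ with $C$ invertible. - $X=[x_1,\dots,x_n]$ satisfies $X^*BX=I$ (so $CX$ is unitary) and $AX=BX\Lambda$, with $\Lambda$ real diagonal. - $X_m=[x_1,\dots,x_m]$ and $X_m'=[x_{m+1},\dots,x_n]$. - $\|\cdot\|$ is the spectral norm; $(\cdot)^{-1/2}$ of a Hermitian positive definite matrix is the principal inverse square root. *)

(* Complex matrices are modelled over an arbitrary
   numClosedFieldType C (e.g. the complex numbers), with conjugation Num.conj. *)
From HB Require Import structures.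
From mathcomp Require Import all_boot all_order all_algebra.
Set Implicit Arguments. Unset Strict Implicit. Unset Printing Implicit Defensive.
Import Order.TTheory GRing.Theory Num.Theory.
Local Open Scope ring_scope.

Section Defs.
Variable C : numClosedFieldType.

Definition ctr (a b : nat) (A : 'M[C]_(a, b)) : 'M[C]_(b, a) :=
  (map_mx Num.conj A)^T.

Definition vnorm2 (a : nat) (x : 'cV[C]_a) : C := \sum_i `|x i 0| ^+ 2.

(* spectral-norm bound:  ||A|| <= c  (the spectral norm is the operator norm
   induced by the Euclidean norm, so this is its defining property) *)
Definition norm_le (a b : nat) (A : 'M[C]_(a, b)) (c : C) : Prop :=
  0 <= c /\ forall x : 'cV[C]_b, vnorm2 (A *m x) <= c ^+ 2 * vnorm2 x.

Definition is_specnorm (a b : nat) (A : 'M[C]_(a, b)) (e : C) : Prop :=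
  norm_le A e /\ forall c, norm_le A c -> e <= c.

Definition herm_mx (a : nat) (M : 'M[C]_a) : Prop := ctr M = M.

Definition posdef_mx (a : nat) (M : 'M[C]_a) : Prop :=
  herm_mx M /\ forall x : 'cV[C]_a, x != 0 -> 0 < (ctr x *m M *m x) 0 0.

Definition unitary_mx (a : nat) (U : 'M[C]_a) : Prop := ctr U *m U = 1%:M.

Definition is_pinvsqrt (a : nat) (M S : 'M[C]_a) : Prop :=
  posdef_mx S /\ S *m S *m M = 1%:M.

Definition real_diag (a : nat) (D : 'M[C]_a) : Prop :=
  exists d : 'rV[C]_a, D = diag_mx d /\ forall i, d 0 i \is Num.real.

End Defs.

From HB Require Import structures.
From mathcomp Require Import all_boot all_order all_algebra ring.
Import Order.TTheory GRing.Theory Num.Theory.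
Local Open Scope ring_scope.
Set Implicit Arguments. Unset Strict Implicit.

(* Since X^*BX = I, the matrix X is invertible with inverse X^*B, so in the
   basis X the matrix Q reads  Q = X Z U  with
       Z = X^*BQU^* = [[L, S], [G L, T]],     L := Linv,
   where S, T are the coordinates of V.  The hypothesis Q^*BQ = I says that Z
   is an isometry, which splits into  L(I + G^*G)L = I,  S = -G^*T  and
   T^* (I + G G^* ) T = I.  Hence both L and T shrink lengths, but at most by a
   factor sqrt(1 + eps^2).  A positive semidefinite matrix squeezed in this
   way is eps^2-close to the identity ([near_identity], via the spectral
   theorem); this bounds L - I, and R - I for the polar decomposition
   T = H R.  Parts (2) and (3) then follow from the block form of Z by the
   calculus of spectral-norm bounds: [norm_le] is stable under sums,
   products, adjoints and submatrices. *)

Section NormCalculus.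
Variable C : numClosedFieldType.

Lemma ctr_mul p q s (A : 'M[C]_(p, q)) (B : 'M[C]_(q, s)) :
  ctr (A *m B) = ctr B *m ctr A.
Proof. by rewrite /ctr map_mxM trmx_mul. Qed.

Lemma ctrD p q (A B : 'M[C]_(p, q)) : ctr (A + B) = ctr A + ctr B.
Proof. by rewrite /ctr map_mxD linearD. Qed.

Lemma ctrN p q (A : 'M[C]_(p, q)) : ctr (- A) = - ctr A.
Proof. by rewrite /ctr map_mxN linearN. Qed.

Lemma ctrB p q (A B : 'M[C]_(p, q)) : ctr (A - B) = ctr A - ctr B.
Proof. by rewrite ctrD ctrN. Qed.

Lemma ctrK p q (A : 'M[C]_(p, q)) : ctr (ctr A) = A.
Proof. by apply/matrixP => i j; rewrite !mxE conjCK. Qed.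

Lemma ctr1 p : ctr (1%:M : 'M[C]_p) = 1%:M.
Proof. by rewrite /ctr map_mx1 trmx1. Qed.

Lemma ctr0 p q : ctr (0 : 'M[C]_(p, q)) = 0.
Proof. by rewrite /ctr map_mx0 trmx0. Qed.

Lemma ctr_block p1 p2 q1 q2 (A : 'M[C]_(p1, q1)) (B : 'M[C]_(p1, q2))
    (D : 'M[C]_(p2, q1)) (E : 'M[C]_(p2, q2)) :
  ctr (block_mx A B D E) = block_mx (ctr A) (ctr D) (ctr B) (ctr E).
Proof. by rewrite /ctr map_block_mx tr_block_mx. Qed.

Lemma ctr_diag p (d : 'rV[C]_p) :
  (forall i, d 0 i \is Num.real) -> ctr (diag_mx d) = diag_mx d.
Proof.
move=> d_real; apply/matrixP => i j; rewrite !mxE eq_sym.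
by case: eqP => [->|]; rewrite ?mulr1n ?mulr0n ?conjC0 // conj_Creal.
Qed.

Lemma vnorm2E n (x : 'cV[C]_n) : vnorm2 x = (ctr x *m x) 0 0.
Proof. by rewrite /vnorm2 mxE; apply: eq_bigr => i _; rewrite !mxE normCK mulrC. Qed.

Lemma vnorm2_dotmx n (x : 'cV[C]_n) : vnorm2 x = dotmx x^T x^T.
Proof. by rewrite vnorm2E dotmxE !mxE; apply: eq_bigr => i _; rewrite !mxE mulrC. Qed.

Lemma vnorm2_ge0 n (x : 'cV[C]_n) : 0 <= vnorm2 x.
Proof. by apply: sumr_ge0 => i _; rewrite exprn_ge0. Qed.

Lemma vnorm2_triangle n (x y : 'cV[C]_n) :
  sqrtC (vnorm2 (x + y)) <= sqrtC (vnorm2 x) + sqrtC (vnorm2 y).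
Proof. by rewrite !vnorm2_dotmx linearD /= (triangle_lerif (@dotmx C n) _ _).1. Qed.

Lemma vnorm2_CauchySchwarz n (x y : 'cV[C]_n) :
  `|(ctr x *m y) 0 0| ^+ 2 <= vnorm2 x * vnorm2 y.
Proof.
have -> : (ctr x *m y) 0 0 = dotmx y^T x^T.
  by rewrite dotmxE !mxE; apply: eq_bigr => i _; rewrite !mxE mulrC.
by rewrite !vnorm2_dotmx mulrC (CauchySchwarz (@dotmx C n) _ _).1.
Qed.

Lemma vnorm2N n (x : 'cV[C]_n) : vnorm2 (- x) = vnorm2 x.
Proof. by rewrite /vnorm2; apply: eq_bigr => i _; rewrite mxE normrN. Qed.

Lemma vnorm2Z n (a : C) (x : 'cV[C]_n) : vnorm2 (a *: x) = `|a| ^+ 2 * vnorm2 x.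
Proof. by rewrite /vnorm2 mulr_sumr; apply: eq_bigr => i _; rewrite mxE normrM exprMn. Qed.

Lemma vnorm2_0 n : vnorm2 (0 : 'cV[C]_n) = 0.
Proof. by rewrite vnorm2E mulmx0 mxE. Qed.

Lemma vnorm2_col p q (u : 'cV[C]_p) (v : 'cV[C]_q) :
  vnorm2 (col_mx u v) = vnorm2 u + vnorm2 v.
Proof.
by rewrite /vnorm2 big_split_ord; congr (_ + _); apply: eq_bigr => i _;
  rewrite ?col_mxEu ?col_mxEd.
Qed.

Lemma vnorm2_mul p q (A : 'M[C]_(p, q)) x :
  vnorm2 (A *m x) = (ctr x *m (ctr A *m A) *m x) 0 0.
Proof. by rewrite vnorm2E ctr_mul !mulmxA. Qed.

Lemma vnorm2_split p q1 q2 (A : 'M[C]_(q1, p)) (B : 'M[C]_(q2, p)) x :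
  ctr A *m A + ctr B *m B = 1%:M -> vnorm2 x = vnorm2 (A *m x) + vnorm2 (B *m x).
Proof.
move=> AB; rewrite !vnorm2_mul vnorm2E.
have -> : ctr x *m x = ctr x *m (ctr A *m A + ctr B *m B) *m x by rewrite AB mulmx1.
by rewrite mulmxDr mulmxDl mxE.
Qed.

Lemma vnorm2_isometry p q (W : 'M[C]_(p, q)) x :
  ctr W *m W = 1%:M -> vnorm2 (W *m x) = vnorm2 x.
Proof. by move=> WW; rewrite vnorm2_mul WW mulmx1 vnorm2E. Qed.

(* The same bounds phrased with the Euclidean norm itself, which is
   subadditive and therefore better suited to sums. *)
Lemma norm_leP p q (A : 'M[C]_(p, q)) c :
  norm_le A c <->
  0 <= c /\ forall x, sqrtC (vnorm2 (A *m x)) <= c * sqrtC (vnorm2 x).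
Proof.
have sqrt_bound x : c ^+ 2 * vnorm2 x = sqrtC (c ^+ 2 * vnorm2 x) ^+ 2.
  by rewrite sqrtCK.
split=> -[c0 bound]; split=> // x.
  rewrite -[c](sqrCK c0) -sqrtCM ?nnegrE ?exprn_ge0 ?vnorm2_ge0 //.
  by rewrite ler_sqrtC ?nnegrE ?mulr_ge0 ?exprn_ge0 ?vnorm2_ge0.
have := bound x; rewrite -[c](sqrCK c0) -sqrtCM ?nnegrE ?exprn_ge0 ?vnorm2_ge0 //.
by rewrite ler_sqrtC ?nnegrE ?mulr_ge0 ?exprn_ge0 ?vnorm2_ge0 // sqrCK.
Qed.

Lemma norm_le_ge0 p q (A : 'M[C]_(p, q)) c : norm_le A c -> 0 <= c.
Proof. by case. Qed.

Lemma norm_le_weaken p q (A : 'M[C]_(p, q)) a b :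
  norm_le A a -> a <= b -> norm_le A b.
Proof.
move=> /norm_leP [a0 bound] ab; apply/norm_leP; split; first exact: le_trans ab.
by move=> x; rewrite (le_trans (bound x)) // ler_wpM2r ?sqrtC_ge0 ?vnorm2_ge0.
Qed.

Lemma norm_le_mul p q s (A : 'M[C]_(p, q)) (B : 'M[C]_(q, s)) a b :
  norm_le A a -> norm_le B b -> norm_le (A *m B) (a * b).
Proof.
move=> /norm_leP [a0 boundA] /norm_leP [b0 boundB].
apply/norm_leP; split; first exact: mulr_ge0.
by move=> x; rewrite -mulmxA (le_trans (boundA _)) // -mulrA ler_wpM2l.
Qed.

Lemma norm_le_add p q (A B : 'M[C]_(p, q)) a b :
  norm_le A a -> norm_le B b -> norm_le (A + B) (a + b).
Proof.
move=> /norm_leP [a0 boundA] /norm_leP [b0 boundB].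
apply/norm_leP; split; first exact: addr_ge0.
move=> x; rewrite mulmxDl (le_trans (vnorm2_triangle _ _)) // mulrDl.
exact: lerD.
Qed.

Lemma norm_leN p q (A : 'M[C]_(p, q)) a : norm_le A a -> norm_le (- A) a.
Proof. by case=> a0 bound; split=> // x; rewrite mulNmx vnorm2N. Qed.

Lemma norm_le_isometry p q (W : 'M[C]_(p, q)) : ctr W *m W = 1%:M -> norm_le W 1.
Proof. by move=> WW; split=> // x; rewrite vnorm2_isometry // expr1n mul1r. Qed.

Lemma norm_le1 p : norm_le (1%:M : 'M[C]_p) 1.
Proof. by apply: norm_le_isometry; rewrite ctr1 mulmx1. Qed.

(* The adjoint has the same norm: a Cauchy--Schwarz duality argument. *)
Lemma norm_le_ctr p q (A : 'M[C]_(p, q)) a : norm_le A a -> norm_le (ctr A) a.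
Proof.
case=> a0 bound; split=> // x; set y := ctr A *m x.
have y_dual : vnorm2 y = (ctr x *m (A *m y)) 0 0.
  by rewrite vnorm2E /y ctr_mul ctrK !mulmxA.
have sq_bound : vnorm2 y ^+ 2 <= vnorm2 x * (a ^+ 2 * vnorm2 y).
  have -> : vnorm2 y ^+ 2 = `|(ctr x *m (A *m y)) 0 0| ^+ 2.
    by rewrite -y_dual ger0_norm ?vnorm2_ge0.
  by rewrite (le_trans (vnorm2_CauchySchwarz _ _)) // ler_wpM2l ?vnorm2_ge0.
have [y0|y_neq0] := eqVneq (vnorm2 y) 0.
  by rewrite y0 mulr_ge0 ?exprn_ge0 ?vnorm2_ge0.
have y_gt0 : 0 < vnorm2 y by rewrite lt_def y_neq0 vnorm2_ge0.
by rewrite -(ler_pM2r y_gt0) -expr2 (le_trans sq_bound) // mulrCA mulrA.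
Qed.

Lemma norm_le_sandwich p q s t (A : 'M[C]_(q, p)) (D : 'M[C]_(q, s))
    (B : 'M[C]_(s, t)) a d b :
  norm_le A a -> norm_le D d -> norm_le B b -> norm_le (ctr A *m D *m B) (a * d * b).
Proof. by move=> nA nD nB; apply/norm_le_mul/nB/norm_le_mul/nD/norm_le_ctr. Qed.

Lemma norm_le_usub p1 p2 q (A : 'M[C]_(p1 + p2, q)) a :
  norm_le A a -> norm_le (usubmx A) a.
Proof.
case=> a0 bound; split=> // x; rewrite mul_usub_mx (le_trans _ (bound x)) //.
by rewrite -{2}(vsubmxK (A *m x)) vnorm2_col lerDl vnorm2_ge0.
Qed.

Lemma norm_le_dsub p1 p2 q (A : 'M[C]_(p1 + p2, q)) a :
  norm_le A a -> norm_le (dsubmx A) a.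
Proof.
case=> a0 bound; split=> // x; rewrite mul_dsub_mx (le_trans _ (bound x)) //.
by rewrite -{2}(vsubmxK (A *m x)) vnorm2_col lerDr vnorm2_ge0.
Qed.

Lemma norm_le_lsub p q1 q2 (A : 'M[C]_(p, q1 + q2)) a :
  norm_le A a -> norm_le (lsubmx A) a.
Proof.
case=> a0 bound; split=> // x; have := bound (col_mx x 0).
by rewrite -{1}(hsubmxK A) mul_row_col mulmx0 addr0 vnorm2_col vnorm2_0 addr0.
Qed.

Lemma norm_le_rsub p q1 q2 (A : 'M[C]_(p, q1 + q2)) a :
  norm_le A a -> norm_le (rsubmx A) a.
Proof.
case=> a0 bound; split=> // x; have := bound (col_mx 0 x).
by rewrite -{1}(hsubmxK A) mul_row_col mulmx0 add0r vnorm2_col vnorm2_0 add0r.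
Qed.

Lemma norm_le_ul p1 p2 q1 q2 (A : 'M[C]_(p1 + p2, q1 + q2)) a :
  norm_le A a -> norm_le (ulsubmx A) a.
Proof. by move=> nA; apply/norm_le_lsub/norm_le_usub. Qed.

Lemma norm_le_dr p1 p2 q1 q2 (A : 'M[C]_(p1 + p2, q1 + q2)) a :
  norm_le A a -> norm_le (drsubmx A) a.
Proof. by move=> nA; apply/norm_le_rsub/norm_le_dsub. Qed.

Lemma norm_le_diag p (d : 'rV[C]_p) c :
  0 <= c -> (forall i, `|d 0 i| <= c) -> norm_le (diag_mx d) c.
Proof.
move=> c0 bound; split=> // x; rewrite /vnorm2 mulr_sumr; apply: ler_sum => i _.
by rewrite mul_diag_mx mxE normrM exprMn ler_wpM2r ?exprn_ge0 // lerXn2r ?nnegrE.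
Qed.

End NormCalculus.
Arguments norm_le1 {C p}.

Section Spectral.
Variable C : numClosedFieldType.

Definition psd_mx p (M : 'M[C]_p) : Prop :=
  herm_mx M /\ forall x : 'cV[C]_p, 0 <= (ctr x *m M *m x) 0 0.

Definition udiag p (P : 'M[C]_p) (y : 'rV[C]_p) : 'M[C]_p :=
  ctr P *m diag_mx y *m P.

Lemma unitary_mxC p (P : 'M[C]_p) : unitary_mx P -> P *m ctr P = 1%:M.
Proof. exact: mulmx1C. Qed.

(* The spectral theorem, from the library's theorem for normal matrices. *)
Lemma hermitian_spectral p (Y : 'M[C]_p) :
  herm_mx Y -> exists (P : 'M[C]_p) (y : 'rV[C]_p), unitary_mx P /\ Y = udiag P y.
Proof.
move=> hY.
have ctrE q r (A : 'M[C]_(q, r)) : (A^T ^ Num.conj)%sesqui = ctr A.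
  by apply/matrixP => i j; rewrite !mxE.
have nY : Y \is normalmx by apply/normalmxP; rewrite ctrE hY.
have /unitarymxP := spectral_unitarymx Y; rewrite ctrE => PP.
exists (spectralmx Y), (spectral_diag Y); split; first exact: mulmx1C.
by rewrite {1}(orthomx_spectralP nY) invmx_unitary ?spectral_unitarymx // ctrE.
Qed.

Lemma udiagM p (P : 'M[C]_p) (a b : 'rV[C]_p) : unitary_mx P ->
  udiag P a *m udiag P b = udiag P (\row_i (a 0 i * b 0 i)).
Proof.
move=> /unitary_mxC PP.
have diagM : diag_mx a *m diag_mx b = diag_mx (\row_i (a 0 i * b 0 i)).
  apply/matrixP => i j; rewrite mul_diag_mx !mxE.
  by case: (eqVneq i j) => [->|]; rewrite ?mulr1n ?mulr0n ?mulr0.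
by rewrite /udiag -!mulmxA (mulmxA P) PP mul1mx (mulmxA (diag_mx a)) diagM !mulmxA.
Qed.

Lemma udiag1 p (P : 'M[C]_p) : unitary_mx P -> udiag P (const_mx 1) = 1%:M.
Proof. by rewrite /udiag diag_const_mx mulmx1. Qed.

Lemma udiagB p (P : 'M[C]_p) (a b : 'rV[C]_p) :
  udiag P (a - b) = udiag P a - udiag P b.
Proof. by rewrite /udiag linearB /= mulmxBr mulmxBl. Qed.

Lemma udiag_herm p (P : 'M[C]_p) (y : 'rV[C]_p) :
  (forall i, y 0 i \is Num.real) -> herm_mx (udiag P y).
Proof. by move=> y_real; rewrite /herm_mx /udiag !ctr_mul ctrK ctr_diag // mulmxA. Qed.

Lemma udiag_eigen p (P : 'M[C]_p) (y : 'rV[C]_p) i : unitary_mx P ->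
  let x := ctr P *m (delta_mx i 0 : 'cV[C]_p) in vnorm2 x = 1 /\ udiag P y *m x = y 0 i *: x.
Proof.
move=> PP x; split.
  rewrite vnorm2_isometry ?ctrK ?unitary_mxC // /vnorm2 (bigD1 i) //= big1.
    by rewrite mxE !eqxx normr1 expr1n addr0.
  by move=> j ji; rewrite mxE (negbTE ji) normr0 expr0n.
rewrite /udiag /x -!mulmxA (mulmxA P) unitary_mxC // mul1mx scalemxAr.
congr (_ *m _); apply/matrixP => j l; rewrite mul_diag_mx !mxE.
by case: (eqVneq i j) => [->|]; rewrite ?mulr0 ?mulr1 //= ?mulr0n ?mulr0.
Qed.

Lemma udiag_eigenvalue p (P : 'M[C]_p) (y : 'rV[C]_p) i : unitary_mx P ->
  let x := ctr P *m (delta_mx i 0 : 'cV[C]_p) in (ctr x *m udiag P y *m x) 0 0 = y 0 i.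
Proof.
move=> PP x; have [x1 eig] := udiag_eigen y i PP.
by rewrite -mulmxA eig -scalemxAr mxE -vnorm2E x1 mulr1.
Qed.

Lemma norm_le_udiag p (P : 'M[C]_p) (y : 'rV[C]_p) c : unitary_mx P ->
  0 <= c -> (forall i, `|y 0 i| <= c) -> norm_le (udiag P y) c.
Proof.
move=> PP c0 bound; rewrite -[c]mul1r -[_ * c]mulr1.
apply: norm_le_sandwich (norm_le_diag c0 bound) (norm_le_isometry PP).
exact: norm_le_isometry.
Qed.

Lemma psd_spectral p (Y : 'M[C]_p) : psd_mx Y ->
  exists (P : 'M[C]_p) (y : 'rV[C]_p),
    [/\ unitary_mx P, Y = udiag P y & forall i, 0 <= y 0 i].
Proof.
move=> [hY Y_ge0]; have [P [y [PP eY]]] := hermitian_spectral hY.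
by exists P, y; split=> // i; rewrite -(udiag_eigenvalue y i PP) -eY Y_ge0.
Qed.

Lemma psd_gram q p (A : 'M[C]_(q, p)) : psd_mx (ctr A *m A).
Proof.
split; first by rewrite /herm_mx ctr_mul ctrK.
by move=> x; rewrite -vnorm2_mul vnorm2_ge0.
Qed.

Lemma udiag_sqrt p (P : 'M[C]_p) (y : 'rV[C]_p) : unitary_mx P ->
  (forall i, 0 <= y 0 i) ->
  let R := udiag P (\row_i sqrtC (y 0 i)) in herm_mx R /\ R *m R = udiag P y.
Proof.
move=> PP y_ge0 R; split.
  by apply: udiag_herm => i; rewrite mxE ger0_real ?sqrtC_ge0.
rewrite udiagM //; congr (udiag _ _); apply/rowP => i.
by rewrite !mxE -expr2 sqrtCK.
Qed.

Lemma psd_udiag p (P : 'M[C]_p) (y : 'rV[C]_p) : unitary_mx P ->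
  (forall i, 0 <= y 0 i) -> psd_mx (udiag P y).
Proof.
move=> PP y_ge0; have [R_herm RR] := udiag_sqrt PP y_ge0.
by rewrite -RR -{1}R_herm; apply: psd_gram.
Qed.

Lemma near_one (y e : C) : 0 <= y -> 0 <= e ->
  y ^+ 2 <= 1 -> 1 <= (1 + e) * y ^+ 2 -> `|y - 1| <= e.
Proof.
move=> y0 e0 y_le1 y_ge.
have y1 : y <= 1 by rewrite -ler_sqr ?nnegrE // expr1n.
rewrite ler0_norm ?subr_le0 // opprB lerBlDr (le_trans y_ge) //.
rewrite mulrDl mul1r addrC lerD //; first by rewrite -[X in _ <= X]mulr1 ler_wpM2l.
by rewrite expr2 -[X in _ <= X]mul1r ler_wpM2r.
Qed.

Lemma near_identity p (Y : 'M[C]_p) (e : C) : psd_mx Y -> 0 <= e ->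
  (forall x, vnorm2 (Y *m x) <= vnorm2 x) ->
  (forall x, vnorm2 x <= (1 + e) * vnorm2 (Y *m x)) ->
  norm_le (Y - 1%:M) e.
Proof.
move=> /psd_spectral [P [y [PP -> y_ge0]]] e0 shrink expand.
rewrite -(udiag1 PP) -udiagB; apply: norm_le_udiag => // i; rewrite !mxE.
have [x1 eig] := udiag_eigen y i PP.
have eig2 : vnorm2 (udiag P y *m (ctr P *m delta_mx i 0)) = y 0 i ^+ 2.
  by rewrite eig vnorm2Z x1 mulr1 ger0_norm.
apply: near_one => //; first by rewrite -eig2 -x1 shrink.
by have := expand (ctr P *m delta_mx i 0); rewrite eig2 x1.
Qed.

Lemma polar_decomposition q p (T : 'M[C]_(q, p)) (c : C) :
  (forall x, vnorm2 x <= c * vnorm2 (T *m x)) ->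
  exists (H : 'M[C]_(q, p)) (R : 'M[C]_p),
    [/\ T = H *m R, ctr H *m H = 1%:M, psd_mx R &
        forall x, vnorm2 (R *m x) = vnorm2 (T *m x)].
Proof.
move=> T_below; have [P [y [PP TT y_ge0]]] := psd_spectral (psd_gram T).
have [R_herm RR] := udiag_sqrt PP y_ge0.
set s := \row_i sqrtC (y 0 i) in R_herm RR; set R := udiag P s in R_herm RR.
have s_ge0 i : 0 <= s 0 i by rewrite mxE sqrtC_ge0.
have R_iso x : vnorm2 (R *m x) = vnorm2 (T *m x).
  by rewrite !vnorm2_mul R_herm RR TT.
have s_neq0 i : s 0 i != 0.
  have [x1 eig] := udiag_eigen s i PP; apply/eqP => si0.
  have := T_below (ctr P *m delta_mx i 0).
  by rewrite -R_iso eig si0 scale0r vnorm2_0 mulr0 x1 ler10.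
pose Rinv := udiag P (\row_i (s 0 i)^-1).
have R_Rinv : R *m Rinv = 1%:M.
  rewrite udiagM // -(udiag1 PP); congr (udiag _ _); apply/rowP => i.
  by have := s_neq0 i; rewrite !mxE => si_neq0; rewrite divff.
have Rinv_herm : herm_mx Rinv.
  by apply: udiag_herm => i; rewrite mxE realV ger0_real.
exists (T *m Rinv), R; split; last exact: R_iso.
- by rewrite -mulmxA mulmx1C // mulmx1.
- rewrite ctr_mul Rinv_herm mulmxA -(mulmxA Rinv) TT -RR (mulmxA Rinv R R).
  by rewrite (mulmx1C R_Rinv) mul1mx R_Rinv.
- exact: psd_udiag.
Qed.

End Spectral.

Section Blocks.
Variable C : numClosedFieldType.

Lemma block_isometry p1 p2 q1 q2 (A : 'M[C]_(p1, q1)) (B : 'M[C]_(p1, q2))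
    (D : 'M[C]_(p2, q1)) (E : 'M[C]_(p2, q2)) :
  ctr (block_mx A B D E) *m block_mx A B D E = 1%:M ->
  [/\ ctr A *m A + ctr D *m D = 1%:M, ctr A *m B + ctr D *m E = 0
    & ctr B *m B + ctr E *m E = 1%:M].
Proof.
by rewrite ctr_block mulmx_block scalar_mx_block => /eq_block_mx [-> -> _ ->].
Qed.

Lemma block_congruence p1 p2 q1 q2 (A : 'M[C]_(p1, q1)) (B : 'M[C]_(p1, q2))
    (D : 'M[C]_(p2, q1)) (E : 'M[C]_(p2, q2)) (M : 'M[C]_p1) (N : 'M[C]_p2) :
  ctr (block_mx A B D E) *m block_mx M 0 0 N *m block_mx A B D E =
  block_mx (ctr A *m M *m A + ctr D *m N *m D) (ctr A *m M *m B + ctr D *m N *m E)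
           (ctr B *m M *m A + ctr E *m N *m D) (ctr B *m M *m B + ctr E *m N *m E).
Proof. by rewrite ctr_block !mulmx_block ?mulmx0 ?mul0mx ?addr0 ?add0r. Qed.

End Blocks.

Lemma squeeze_bounds (C : numClosedFieldType) p q s (A : 'M[C]_(q, p))
    (B : 'M[C]_(s, q)) (e : C) :
  norm_le B e -> (forall x, vnorm2 x = vnorm2 (A *m x) + vnorm2 (B *m (A *m x))) ->
  (forall x, vnorm2 (A *m x) <= vnorm2 x) /\
  (forall x, vnorm2 x <= (1 + e ^+ 2) * vnorm2 (A *m x)).
Proof.
move=> [_ nB] split_x; split=> x.
  by rewrite [X in _ <= X]split_x lerDl vnorm2_ge0.
by rewrite [X in X <= _]split_x mulrDl mul1r lerD2l nB.
Qed.

Lemma congruence_near_identity (C : numClosedFieldType) p (Y D : 'M[C]_p) (e d : C) :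
  norm_le (Y - 1%:M) e -> norm_le Y 1 -> norm_le D d ->
  norm_le (ctr Y *m D *m Y - D) (e * d * 1 + 1 * d * e).
Proof.
move=> nY1 nY nD.
have -> : ctr Y *m D *m Y - D = ctr (Y - 1%:M) *m D *m Y + ctr 1%:M *m D *m (Y - 1%:M).
  by rewrite ctrB ctr1 !mulmxBl !mulmxBr !mul1mx mulmx1 addrA subrK.
exact: norm_le_add (norm_le_sandwich nY1 nD nY) (norm_le_sandwich norm_le1 nD nY1).
Qed.

(* Analysis of the coordinate matrix Z = [[L, S], [G L, T]] of Q in the
   basis X, where Z is an isometry and L is Hermitian positive definite;
   afterwards, the blocks of Theta = Z - diag(I, H) and of
   Delta = Z^* diag(Dm, Dm') Z - diag(Dm, H^* Dm' H) are estimated. *)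
Section Coordinates.
Variables (C : numClosedFieldType) (m k r : nat) (eps : C).
Variables (G : 'M[C]_(r, m)) (L : 'M[C]_m) (S : 'M[C]_(m, k)) (T : 'M[C]_(r, k)).
Hypothesis nG : norm_le G eps.
Hypothesis L_posdef : posdef_mx L.
Hypothesis Z_iso : ctr (block_mx L S (G *m L) T) *m block_mx L S (G *m L) T = 1%:M.

Let eps_ge0 : 0 <= eps := norm_le_ge0 nG.

Lemma L_unit : L \in unitmx.
Proof.
have [ZL _ _] := block_isometry Z_iso.
have : ctr L *m ((1%:M + ctr G *m G) *m L) = 1%:M.
  by rewrite mulmxDl mul1mx mulmxDr -ZL ctr_mul !mulmxA.
by case/mulmx1_unit => _; rewrite unitmx_mul => /andP [].
Qed.

(* Orthogonality of the two block columns of Z. *)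
Lemma S_eq : S = - (ctr G *m T).
Proof.
have [_ ZLS _] := block_isometry Z_iso; have [L_herm _] := L_posdef.
move: ZLS; rewrite ctr_mul L_herm -mulmxA -mulmxDr.
move=> /(congr1 (mulmx (invmx L))); rewrite mulKmx ?L_unit // mulmx0.
by move/eqP; rewrite addr_eq0 => /eqP.
Qed.

Lemma L_bounds : (forall x, vnorm2 (L *m x) <= vnorm2 x) /\
  (forall x, vnorm2 x <= (1 + eps ^+ 2) * vnorm2 (L *m x)).
Proof.
have [ZL _ _] := block_isometry Z_iso.
by apply: (squeeze_bounds nG) => x; rewrite mulmxA; apply: vnorm2_split.
Qed.

Lemma T_bounds : (forall x, vnorm2 (T *m x) <= vnorm2 x) /\
  (forall x, vnorm2 x <= (1 + eps ^+ 2) * vnorm2 (T *m x)).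
Proof.
have [_ _ ZT] := block_isometry Z_iso.
apply: (squeeze_bounds (norm_le_ctr nG)) => x.
by rewrite (vnorm2_split x ZT) addrC S_eq mulNmx vnorm2N mulmxA.
Qed.

Lemma L_contraction : norm_le L 1.
Proof. by split=> // x; rewrite expr1n mul1r (L_bounds.1 x). Qed.

Lemma L_near_identity : norm_le (L - 1%:M) (eps ^+ 2).
Proof.
have [L_herm L_pos] := L_posdef.
apply: near_identity (exprn_ge0 2 eps_ge0) L_bounds.1 L_bounds.2; split=> // x.
by have [->|/L_pos/ltW] := eqVneq x 0; rewrite ?mulmx0 ?mul0mx ?mxE.
Qed.

Lemma GL_small : norm_le (G *m L) eps.
Proof. by rewrite -[eps]mulr1; apply: norm_le_mul nG L_contraction. Qed.

Lemma T_contraction : norm_le T 1.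
Proof. by split=> // x; rewrite expr1n mul1r (T_bounds.1 x). Qed.

Lemma S_small : norm_le S eps.
Proof. by rewrite S_eq -[eps]mulr1; apply/norm_leN/norm_le_mul/T_contraction/norm_le_ctr. Qed.

Lemma T_polar : exists (H : 'M[C]_(r, k)) (R : 'M[C]_k),
  [/\ T = H *m R, ctr H *m H = 1%:M, norm_le R 1 & norm_le (R - 1%:M) (eps ^+ 2)].
Proof.
have [H [R [eT HH R_psd R_iso]]] := polar_decomposition T_bounds.2.
exists H, R; split=> //; first by split=> // x; rewrite R_iso expr1n mul1r T_bounds.1.
apply: near_identity (exprn_ge0 2 eps_ge0) _ _ => // x; rewrite R_iso.
  exact: T_bounds.1.
exact: T_bounds.2.
Qed.

Variables (H : 'M[C]_(r, k)) (R : 'M[C]_k).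
Hypotheses (eT : T = H *m R) (HH : ctr H *m H = 1%:M).
Hypotheses (nR : norm_le R 1) (nR1 : norm_le (R - 1%:M) (eps ^+ 2)).

Lemma Theta_bounds :
  let Theta := block_mx L S (G *m L) T - block_mx 1%:M 0 0 H in
  [/\ norm_le (ulsubmx Theta) (eps ^+ 2), norm_le (drsubmx Theta) (eps ^+ 2),
      norm_le (ursubmx Theta) ((1 + eps ^+ 2) * eps)
    & norm_le (dlsubmx Theta) ((1 + eps ^+ 2) * eps)].
Proof.
have eps_le : eps <= (1 + eps ^+ 2) * eps.
  by rewrite mulrDl mul1r lerDl mulr_ge0 ?exprn_ge0.
rewrite /= opp_block_mx add_block_mx !oppr0 !addr0.
rewrite block_mxKul block_mxKdr block_mxKur block_mxKdl.
split; [exact: L_near_identity | | exact: norm_le_weaken S_small eps_le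
       | exact: norm_le_weaken GL_small eps_le].
rewrite eT -{2}[H]mulmx1 -mulmxBr -[eps ^+ 2]mul1r.
exact: norm_le_mul (norm_le_isometry HH) nR1.
Qed.

Variables (Dm : 'M[C]_m) (Dm' : 'M[C]_r) (d : C).
Hypotheses (nDm : norm_le Dm d) (nDm' : norm_le Dm' d).

Let Z := block_mx L S (G *m L) T.
Let K := ctr H *m Dm' *m H.
Let Delta := ctr Z *m block_mx Dm 0 0 Dm' *m Z - block_mx Dm 0 0 K.

Lemma Delta_bounds :
  [/\ norm_le (ulsubmx Delta) (4 * d * eps ^+ 2),
      norm_le (drsubmx Delta) (4 * d * eps ^+ 2)
    & norm_le (ursubmx Delta) (4 * d * eps)].
Proof.
have d_ge0 : 0 <= d := norm_le_ge0 nDm.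
have le_four (n : nat) (x y : C) :
    (n <= 4)%N -> 0 <= y -> x = n%:R * (d * y) -> x <= 4 * d * y.
  by move=> n_le4 y0 ->; rewrite -mulrA ler_wpM2r ?mulr_ge0 // ler_nat.
have eps2_ge0 : 0 <= eps ^+ 2 := exprn_ge0 2 eps_ge0.
have nK : norm_le K (1 * d * 1).
  exact: norm_le_sandwich (norm_le_isometry HH) nDm' (norm_le_isometry HH).
rewrite /Delta /Z block_congruence opp_block_mx add_block_mx !oppr0 !addr0.
rewrite block_mxKul block_mxKdr block_mxKur; split.
- rewrite addrAC; apply: norm_le_weaken (norm_le_add (congruence_near_identity
    L_near_identity L_contraction nDm) (norm_le_sandwich GL_small nDm' GL_small)) _.
  by apply: (le_four 3%N) => //; ring.
- have -> : ctr T *m Dm' *m T = ctr R *m K *m R by rewrite eT /K !ctr_mul !mulmxA.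
  rewrite -addrA; apply: norm_le_weaken (norm_le_add (norm_le_sandwich S_small
    nDm S_small) (congruence_near_identity nR1 nR nK)) _.
  by apply: (le_four 3%N) => //; ring.
- apply: norm_le_weaken (norm_le_add (norm_le_sandwich L_contraction nDm S_small)
    (norm_le_sandwich GL_small nDm' T_contraction)) _.
  by apply: (le_four 2%N) => //; ring.
Qed.

Lemma Delta_herm : herm_mx Dm -> herm_mx Dm' -> dlsubmx Delta = ctr (ursubmx Delta).
Proof.
move=> Dm_herm Dm'_herm.
have Delta_selfadjoint : ctr Delta = Delta.
  rewrite /Delta /K ctrB !ctr_mul ctrK !ctr_block !ctr0 !ctr_mul ctrK.
  by rewrite Dm_herm Dm'_herm !mulmxA.
by rewrite -{1}Delta_selfadjoint -{1}(submxK Delta) ctr_block block_mxKdl.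
Qed.

End Coordinates.

Lemma real_diag_blocks (C : numClosedFieldType) p1 p2 (D : 'M[C]_(p1 + p2)) :
  real_diag D ->
  [/\ D = block_mx (ulsubmx D) 0 0 (drsubmx D), herm_mx (ulsubmx D)
    & herm_mx (drsubmx D)].
Proof.
move=> [d [-> d_real]].
have eD : diag_mx d = block_mx (ulsubmx (diag_mx d)) 0 0 (drsubmx (diag_mx d)).
  rewrite -[LHS]submxK; congr block_mx; apply/matrixP => i j;
  by rewrite !mxE ?[rshift _ _ == _]eq_sym eq_lrshift mulr0n.
have := ctr_diag d_real; rewrite {1}eD ctr_block !ctr0 {3}eD.
by case/eq_block_mx => Dm_herm _ _ Dm'_herm.
Qed.

(* In B-orthonormal coordinates the B-Gram matrix becomes the ordinary one. *)
Lemma gram_coords (C : numClosedFieldType) n p (B X : 'M[C]_n) (Q : 'M[C]_(n, p)) :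
  herm_mx B -> X *m (ctr X *m B) = 1%:M ->
  ctr Q *m B *m Q = ctr (ctr X *m B *m Q) *m (ctr X *m B *m Q).
Proof.
move=> B_herm X_inv.
rewrite !ctr_mul ctrK B_herm.
have -> : ctr Q *m (B *m X) *m (ctr X *m B *m Q) = ctr Q *m B *m (X *m (ctr X *m B)) *m Q.
  by rewrite !mulmxA.
by rewrite X_inv mulmx1.
Qed.

Lemma unitary_conj1 (C : numClosedFieldType) p (U M : 'M[C]_p) :
  unitary_mx U -> ctr U *m M *m U = 1%:M -> M = 1%:M.
Proof.
move=> /unitary_mxC UU /(congr1 (fun N => U *m N *m ctr U)).
by rewrite mulmx1 UU !mulmxA UU mul1mx -mulmxA UU mulmx1.
Qed.

Theorem lemma3 (C : numClosedFieldType) (m k r : nat)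
  (A B Cf X Lam : 'M[C]_(m + r))
  (G : 'M[C]_(r, m)) (V : 'M[C]_(m + r, k)) (U : 'M[C]_(m + k))
  (Linv : 'M[C]_m) (eps : C) :
  (k < r)%N ->
  herm_mx A -> posdef_mx B -> B = ctr Cf *m Cf -> Cf \in unitmx ->
  ctr X *m B *m X = 1%:M -> A *m X = B *m X *m Lam -> real_diag Lam ->
  is_specnorm G eps -> eps <= 2^-1 ->
  unitary_mx U ->
  let Xm := lsubmx X in
  let Xm' := rsubmx X in
  let W := Xm + Xm' *m G in
  is_pinvsqrt (ctr W *m B *m W) Linv ->
  let Q := row_mx (W *m Linv) V *m U in
  ctr Q *m B *m Q = 1%:M ->
  (* (1) *)
  norm_le (Linv - 1%:M) (eps ^+ 2) /\
  exists (S : 'M[C]_(m, k)) (H : 'M[C]_(r, k)) (R : 'M[C]_k),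
    V = Xm *m S + Xm' *m H *m R /\ norm_le S eps /\
    ctr H *m H = 1%:M /\ norm_le (R - 1%:M) (eps ^+ 2) /\
  (* (2) *)
    (exists Theta : 'M[C]_(m + r, m + k),
       ctr X *m B *m Q = (block_mx 1%:M 0 0 H + Theta) *m U /\
       norm_le (ulsubmx Theta) (eps ^+ 2) /\ norm_le (drsubmx Theta) (eps ^+ 2) /\
       norm_le (ursubmx Theta) ((1 + eps ^+ 2) * eps) /\
       norm_le (dlsubmx Theta) ((1 + eps ^+ 2) * eps)) /\
  (* (3) *)
    (forall (D : 'M[C]_(m + r)) (nD : C), real_diag D -> is_specnorm D nD ->
       exists Delta : 'M[C]_(m + k),
         dlsubmx Delta = ctr (ursubmx Delta) /\
         (ctr Q *m B *m X) *m D *m (ctr X *m B *m Q) =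
           ctr U *m (block_mx (ulsubmx D) 0 0 (ctr H *m drsubmx D *m H) + Delta) *m U /\
         norm_le (ulsubmx Delta) (4 * nD * eps ^+ 2) /\
         norm_le (drsubmx Delta) (4 * nD * eps ^+ 2) /\
         norm_le (ursubmx Delta) (4 * nD * eps)).
Proof.
move=> _ _ [B_herm _] _ _ XBX _ _ [nG _] _ U_unit Xm Xm' W [L_pd _] Q QBQ.
have X_inv : X *m (ctr X *m B) = 1%:M := mulmx1C XBX.
pose Y := ctr X *m B *m V; pose S := usubmx Y; pose T := dsubmx Y.
pose Z := block_mx Linv S (G *m Linv) T.
have eW : W = X *m col_mx 1%:M G by rewrite -{1}(hsubmxK X) mul_row_col mulmx1.
have XBQ : ctr X *m B *m Q = Z *m U.
  rewrite /Q mulmxA mul_mx_row eW !mulmxA XBX mul1mx -/Y -(vsubmxK Y) mul_col_mx.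
  by rewrite mul1mx -block_mxEh.
have Z_iso : ctr Z *m Z = 1%:M.
  apply: (unitary_conj1 U_unit).
  by rewrite -QBQ (gram_coords Q B_herm X_inv) XBQ ctr_mul !mulmxA.
have [H [R [eT HH nR nR1]]] := T_polar nG L_pd Z_iso.
split; first exact: L_near_identity nG L_pd Z_iso.
exists S, H, R; split.
  by rewrite -mulmxA -eT -mul_row_col hsubmxK vsubmxK /Y mulmxA X_inv mul1mx.
split; first exact: S_small nG L_pd Z_iso.
do 2!split=> //; split.
  exists (Z - block_mx 1%:M 0 0 H); split; first by rewrite addrC subrK XBQ.
  by have [] := Theta_bounds nG L_pd Z_iso eT HH nR1.
move=> D nD D_diag [nD_le _].
have [eD Dm_herm Dm'_herm] := real_diag_blocks D_diag.
exists (ctr Z *m D *m Z - block_mx (ulsubmx D) 0 0 (ctr H *m drsubmx D *m H)).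
have [ul dr ur] :=
  Delta_bounds nG L_pd Z_iso eT HH nR nR1 (norm_le_ul nD_le) (norm_le_dr nD_le).
rewrite -eD in ul dr ur; split.
  by have := Delta_herm G Linv S T H Dm_herm Dm'_herm; rewrite -eD.
split=> //.
have -> : ctr Q *m B *m X = ctr (ctr X *m B *m Q) by rewrite !ctr_mul ctrK B_herm mulmxA.
by rewrite XBQ addrC subrK ctr_mul !mulmxA.
Qed.
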